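(* For every $\epsilon,n$, every layered graph $G$ over $\Sigma_{in}$ of depth $n$, every $\epsilon$-sensitive $(G,\Sigma_{out})$-code $\mathsf{C}$, and all $x\in\Sigma_{in}^n$ and $w\in\Sigma_{out}^n$, letting $J$ be the set of indices $i$ with $\mathsf{C}(x)[i]=w[i]$, it holds that $\mathsf{CDec}(w[1:i])=v(x[1:i])$ for all but at most $2\epsilon n$ values of $i\in J$.
   Context: A layered graph over alphabet $\Sigma$ of depth $n$ is a directed graph whose vertices are partitioned into layers $0,\dots,n$, with exactly one vertex (the root) in layer $0$, and each vertex in layer $i<n$ has exactly $|\Sigma|$ out-edges to layer $i+1$ labeled by the distinct elements of $\Sigma$ (endpoints need not be distinct). A string $p\in\Sigma_{in}^i$ determines a unique root path ending at vertex $v(p)$ in layer $i$. A $(G,\Sigma_{out})$-code $\mathsf{C}$ assigns an element of $\Sigma_{out}$ to each edge; $\mathsf{C}(p)$ is the label string along $p$. Suffix distance: $\Delta_{sfx}(a,b)=\max_{0\le i\le m-1}\frac{\Delta(a[i+1:m],b[i+1:m])}{m-i}$ for $a,b\in\Sigma^m$, $\Delta$ Hamming distance. $L_i(\mathsf{C},w,\epsilon)=\{v(p):p\in\Sigma_{in}^i,\ \Delta_{sfx}(\mathsf{C}(p),w[1:i])<1-\epsilon\}$, $L(\mathsf{C},w,\epsilon)=\bigcup_{i=1}^nL_i(\mathsf{C},w,\epsilon)$. For $S\subseteq L(\mathsf{C},w,\epsilon)$, a prefix tree of $S$ is a union of paths $p(v)$ ($v\in S$) from the root to $v$, each with $\Delta_{sfx}(\mathsf{C}(p(v)),w[1:|p(v)|])<1-\epsilon$,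 that forms a rooted tree; $\mathcal{PT}(\mathsf{C},w,\epsilon)$ is the set of all such prefix trees of subsets of $L(\mathsf{C},w,\epsilon)$. $agr(\mathsf{C}(H),w(H))$ is the number of edges of $H$ whose $\mathsf{C}$-label equals $w[i]$, $i$ the edge's depth. $\mathsf{C}$ is $\epsilon$-sensitive if for all $w\in\Sigma_{out}^n$ and all $PT\in\mathcal{PT}(\mathsf{C},w,\epsilon)$, $agr(\mathsf{C}(PT),w(PT))\le(1+\epsilon)n$. The decoder $\mathsf{CDec}$, on input $w'\in\Sigma_{out}^i$, outputs the vertex $v$ such that there exists $p\in\Sigma_{in}^i$ with $v(p)=v$ and $\Delta_{sfx}(\mathsf{C}(p),w')<1-\epsilon$ if exactly one such vertex exists, and outputs $\perp$ otherwise. *)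

From mathcomp Require Import all_boot all_order all_algebra.
Set Implicit Arguments. Unset Strict Implicit. Unset Printing Implicit Defensive.
Import Order.TTheory GRing.Theory Num.Theory.
Local Open Scope ring_scope.

(* Layered graphs.  A layered graph over alphabet Sin of depth n is given  *)
(* by a finite vertex type V, a layer map, a root, and the out-edge map    *)
(* next : V -> Sin -> V : the edge of vertex v (in layer < n) labeled a    *)
(* goes to next v a.  An edge is identified with the pair (v, a).          *)
(* Values of next on layer-n vertices are irrelevant (never used).         *)
Definition layered_graph (Sin V : finType) (n : nat)
  (layer : V -> nat) (root : V) (next : V -> Sin -> V) : Prop :=
  [/\ forall v, (layer v <= n)%N,
      layer root = 0%N,
      forall v, layer v = 0%N -> v = root
    & forall v a, (layer v < n)%N -> layer (next v a) = (layer v).+1 ].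

Fixpoint path_edges (Sin V : Type) (next : V -> Sin -> V) (v : V) (p : seq Sin)
  : seq (V * Sin) :=
  match p with
  | [::] => [::]
  | a :: p' => (v, a) :: path_edges next (next v a) p'
  end.

Definition vend (Sin V : Type) (next : V -> Sin -> V) (root : V) (p : seq Sin) : V :=
  foldl next root p.

Definition code_of (Sin Sout V : Type) (next : V -> Sin -> V) (root : V)
  (C : V -> Sin -> Sout) (p : seq Sin) : seq Sout :=
  map (fun e => C e.1 e.2) (path_edges next root p).

Definition hamming (T : eqType) (a b : seq T) : nat :=
  count (fun xy => xy.1 != xy.2) (zip a b).

(* Suffix distance: max_{0 <= i <= m-1} Delta(a[i+1:m], b[i+1:m]) / (m - i),
   with 0-indexed i, a[i+1:m] = drop i a.  (Only used with m >= 1.) *)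
Definition sfx_dist (R : realFieldType) (T : eqType) (a b : seq T) : R :=
  \big[Num.max/0]_(i < size a)
     ((hamming (drop i a) (drop i b))%:R / (size a - i)%:R).

(* Prefix trees of subsets of L(C, w, eps), given by the list of strings
   p(v) (v in S) determining the root paths. *)
Definition prefix_tree (R : realFieldType) (Sin Sout V : finType) (n : nat)
  (next : V -> Sin -> V) (root : V) (C : V -> Sin -> Sout)
  (eps : R) (w : seq Sout) (ps : seq (seq Sin)) : Prop :=
  [/\ (* each path ends in some L_i, 1 <= i <= n *)
      forall p, p \in ps ->
        [/\ (1 <= size p)%N, (size p <= n)%N &
            sfx_dist R (code_of next root C p) (take (size p) w) < 1 - eps],
      (* one path per vertex of S *)
      uniq (map (vend next root) ps)
    & (* the union of the paths is a rooted tree: no vertex has two distinct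
         incoming edges in the union *)
      forall e1 e2, e1 \in flatten (map (path_edges next root) ps) ->
                    e2 \in flatten (map (path_edges next root) ps) ->
                    next e1.1 e1.2 = next e2.1 e2.2 -> e1 = e2 ].

(* agr(C(PT), w(PT)) : number of edges of the union whose label equals
   w at the edge's depth (the edge leaving layer j has depth j+1, i.e.
   0-indexed position j of w). *)
Definition agr (Sin Sout V : finType) (layer : V -> nat)
  (next : V -> Sin -> V) (root : V) (C : V -> Sin -> Sout)
  (w : seq Sout) (ps : seq (seq Sin)) : nat :=
  count (fun e : V * Sin => onth w (layer e.1) == Some (C e.1 e.2))
        (undup (flatten (map (path_edges next root) ps))).

Definition eps_sensitive (R : realFieldType) (Sin Sout V : finType) (n : nat)
  (layer : V -> nat) (next : V -> Sin -> V) (root : V)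
  (C : V -> Sin -> Sout) (eps : R) : Prop :=
  forall (w : seq Sout), size w = n ->
  forall ps : seq (seq Sin), prefix_tree n next root C eps w ps ->
    (agr layer next root C w ps)%:R <= (1 + eps) * n%:R.

(* The decoder CDec: on w' of length i, the unique vertex v(p), p in Sin^i,
   with sfx_dist(C(p), w') < 1 - eps, if there is exactly one; else None (= ⊥). *)
Definition CDec (R : realFieldType) (Sin Sout V : finType)
  (next : V -> Sin -> V) (root : V) (C : V -> Sin -> Sout) (eps : R)
  (w' : seq Sout) : option V :=
  let cands := undup [seq vend next root (val t) | t <- enum
      [pred t : (size w').-tuple Sin |
         sfx_dist R (code_of next root C (val t)) w' < 1 - eps]] in
  if cands is [:: v] then Some v else None.

From mathcomp Require Import all_boot all_order all_algebra.
From mathcomp Require Import lra.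
Import Order.TTheory GRing.Theory Num.Theory.
Local Open Scope ring_scope.
Set Implicit Arguments. Unset Strict Implicit. Unset Printing Implicit Defensive.

(* For an agreement pattern s, let sfx_margin s be the least value, over the
   nonempty suffixes u of s, of #agreements(u) - eps |u|; a path is within
   suffix distance 1 - eps of w exactly when its margin is positive.  An index
   i of J where CDec fails is of one of two kinds.
   - x[1:i] is far from w[1:i] although position i agrees: a potential
     argument on min (margin, 0) shows this happens at most eps n times.
   - Two root paths with distinct endpoints are close to w[1:i] (i is
     ambiguous).  Give every vertex of L(C, w, eps) a path of maximal margin,
     chosen so that these paths form a tree, extend the deepest one to length
     n, and alter w off the agreements of the tree so that every tree path
     stays close.  Each layer of the tree then carries an agreeing edge and
     each ambiguous layer two, so eps-sensitivity bounds the number of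
     ambiguous i by eps n. *)

Lemma take_zip (S T : Type) k (s : seq S) (t : seq T) :
  take k (zip s t) = zip (take k s) (take k t).
Proof. by elim: s t k => [|x s IH] [|y t] [|k] //=; rewrite IH. Qed.

Lemma drop_zip (S T : Type) k (s : seq S) (t : seq T) :
  drop k (zip s t) = zip (drop k s) (drop k t).
Proof.
elim: s t k => [|x s IH] [|y t] [|k] //=; first by case: drop.
by case: (drop k s).
Qed.

Lemma onth_nth_lt (T : Type) (x0 : T) s k : (k < size s)%N -> onth s k = Some (nth x0 s k).
Proof. by move=> ks; rewrite onthE (nth_map x0). Qed.

Lemma uniq_subset_seq1 (T : eqType) (s : seq T) x :
  uniq s -> x \in s -> {subset s <= [:: x]} -> s = [:: x].
Proof.
move=> s_uniq xs sub; have := uniq_leq_size s_uniq sub.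
by case: s xs {s_uniq sub} => [|y [|z l]] //=; rewrite inE => /eqP ->.
Qed.

Lemma all2_implb_nth (s t : seq bool) : size s = size t ->
  (forall i, (i < size s)%N -> nth false s i -> nth false t i) -> all2 implb s t.
Proof.
elim: s t => [|b s IH] [|c t] //= [st] le_st; apply/andP; split.
  by apply/implyP; apply: (le_st 0%N).
by apply: IH => // i ?; apply: (le_st i.+1).
Qed.

Lemma count_by_levels (T : Type) (f : T -> nat) (P : pred T) m s :
  all (fun x => f x < m)%N s ->
  count P s = \sum_(k <- iota 0 m) count (fun x => P x && (f x == k)) s.
Proof.
elim: s => [|x s IH] /=; first by rewrite big1.
case/andP => fx_m /IH ->; rewrite big_split /=; congr (_ + _)%N.
rewrite (bigD1_seq (f x)) ?mem_iota ?iota_uniq //= eqxx andbT big1 => [|k]; first by case: (P x).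
by rewrite eq_sym => /negPf ->; rewrite andbF.
Qed.

Section SuffixMargin.
Variables (R : realFieldType) (eps : R).

Lemma min0_le (x : R) : Num.min x 0 <= x /\ Num.min x 0 <= 0.
Proof. by rewrite !ge_min !lexx orbT. Qed.

Definition margin_step (acc : R) (b : bool) : R := Num.min acc 0 + b%:R - eps.

Definition sfx_margin (s : seq bool) : R := foldl margin_step 0 s.

Lemma sfx_margin_rcons s b :
  sfx_margin (rcons s b) = Num.min (sfx_margin s) 0 + b%:R - eps.
Proof. by rewrite /sfx_margin foldl_rcons. Qed.

Lemma sfx_margin_le s k : (k < size s)%N ->
  sfx_margin s <= (count id (drop k s))%:R - eps * (size (drop k s))%:R.
Proof.
elim/last_ind: s k => [|s b IH] k //; rewrite size_rcons ltnS leq_eqVlt.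
have [? ?] := min0_le (sfx_margin s); rewrite sfx_margin_rcons => /orP [/eqP-> | ks].
  by rewrite drop_rcons // drop_size /=; lra.
have := IH _ ks; rewrite drop_rcons ?(ltnW ks) // -cats1 count_cat size_cat /= !natrD; lra.
Qed.

Lemma sfx_margin_attained s : s != [::] -> exists2 k, (k < size s)%N &
  sfx_margin s = (count id (drop k s))%:R - eps * (size (drop k s))%:R.
Proof.
elim/last_ind: s => [|s b IH] // _; rewrite sfx_margin_rcons size_rcons.
have [s0|snil] := eqVneq s [::].
  by exists 0%N; rewrite // s0 /sfx_margin /= minxx /=; lra.
have [le0 | gt0] := leP (sfx_margin s) 0; last first.
  by exists (size s); rewrite // drop_rcons // drop_size /=; lra.
have [k ks ->] := IH snil; exists k; first exact: ltnW.
rewrite drop_rcons ?(ltnW ks) // -cats1 count_cat size_cat /= !natrD; lra.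
Qed.

Lemma sfx_margin_gt0P s : s != [::] ->
  reflect (forall k, (k < size s)%N ->
             eps * (size (drop k s))%:R < (count id (drop k s))%:R)
          (0 < sfx_margin s).
Proof.
move=> sn0; apply: (iffP idP) => [pos k ks | all_pos].
  by have := sfx_margin_le ks; lra.
by have [k ks ->] := sfx_margin_attained sn0; have := all_pos k ks; lra.
Qed.

Lemma sfx_margin_mono s t : all2 implb s t -> sfx_margin s <= sfx_margin t.
Proof.
suff mono a a' : a <= a' -> all2 implb s t ->
    foldl margin_step a s <= foldl margin_step a' t by exact: mono.
elim: s t a a' => [|b s IH] [|b' t] //= a a' aa' /andP [bb' st]; apply: IH st.
by rewrite /margin_step lerD2r lerD ?le_min2 // ler_nat; case: b b' bb' => [] [].
Qed.

Lemma sfx_margin_last s : 0 <= eps -> 0 < sfx_margin s -> last false s.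
Proof.
move=> eps_ge0; case/lastP: s => [|s b]; first by rewrite /sfx_margin /= ltxx.
rewrite sfx_margin_rcons last_rcons; have [? ?] := min0_le (sfx_margin s).
by case: b => //=; lra.
Qed.

Lemma sfx_margin_cat_true s m : eps < 1 ->
  0 < sfx_margin s -> 0 < sfx_margin (s ++ nseq m true).
Proof.
move=> eps_lt1; elim: m => [|m IH] pos; first by rewrite cats0.
rewrite -addn1 nseqD catA cats1 sfx_margin_rcons.
by rewrite min_r ?ltW ?IH //=; lra.
Qed.

Lemma count_true_nonpos_prefix_margin s : 0 <= eps ->
  (count (fun k => nth false s k && (sfx_margin (take k.+1 s) <= 0))
         (iota 0 (size s)))%:R <= eps * (size s)%:R.
Proof.
move=> eps_ge0.
suff: (count (fun k => nth false s k && (sfx_margin (take k.+1 s) <= 0))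
         (iota 0 (size s)))%:R <= eps * (size s)%:R + Num.min (sfx_margin s) 0.
  by have [? ?] := min0_le (sfx_margin s); lra.
elim/last_ind: s => [|s b IH]; first by rewrite /sfx_margin /= minxx; lra.
rewrite size_rcons -addn1 iotaD count_cat /= addn0 add0n.
rewrite (@eq_in_count _ _ (fun k => nth false s k && (sfx_margin (take k.+1 s) <= 0))); last first.
  by move=> k; rewrite mem_iota => /andP [_ ks]; rewrite nth_rcons ks -cats1 takel_cat.
rewrite nth_rcons ltnn eqxx take_oversize ?size_rcons // sfx_margin_rcons.
have [_ h_le0] := min0_le (sfx_margin s).
move: IH h_le0; move: (count _ _) (Num.min _ 0) => c h IH h_le0.
rewrite !natrD mulrDr mulr1; case: b => /=.
  by case: (leP (h + 1 - eps) 0) => hb /=; lra.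
by rewrite min_l; lra.
Qed.

End SuffixMargin.

Section Agreements.
Variable T : eqType.
Implicit Types a b : seq T.

Definition agreements a b : seq bool := [seq xy.1 == xy.2 | xy <- zip a b].

Lemma size_agreements a b : size (agreements a b) = minn (size a) (size b).
Proof. by rewrite size_map size_zip. Qed.

Lemma nth_agreements_onth a b k : (k < size a)%N -> (k < size b)%N ->
  nth false (agreements a b) k = (onth a k == onth b k).
Proof. by elim: a b k => [|x a IH] [|y b] [|k] //= /IH; apply. Qed.

Lemma take_agreements k a b : take k (agreements a b) = agreements (take k a) (take k b).
Proof. by rewrite -map_take take_zip. Qed.

Lemma drop_agreements k a b : drop k (agreements a b) = agreements (drop k a) (drop k b).
Proof. by rewrite -map_drop drop_zip. Qed.

Lemma count_agreements_hamming a b :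
  (count id (agreements a b) + hamming a b)%N = minn (size a) (size b).
Proof.
rewrite -size_zip -(count_predC (fun xy : T * T => xy.1 == xy.2)) count_map.
by congr (_ + _)%N; apply: eq_count => xy.
Qed.

Lemma sfx_dist_lt_margin (R : realFieldType) (eps : R) a b :
  size a = size b -> (0 < size a)%N -> eps < 1 ->
  (sfx_dist R a b < 1 - eps) = (0 < sfx_margin eps (agreements a b)).
Proof.
move=> eq_ab a_gt0 eps_lt1; set s := agreements a b.
have s_size : size s = size a by rewrite size_agreements eq_ab minnn.
have s_nil : s != [::] by rewrite -size_eq0 s_size -lt0n.
have suffixE k : (k < size a)%N ->
    ((hamming (drop k a) (drop k b))%:R / (size a - k)%:R < 1 - eps) =
    (eps * (size (drop k s))%:R < (count id (drop k s))%:R).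
  move=> ka; have L_gt0 : (0 : R) < (size a - k)%:R by rewrite ltr0n subn_gt0.
  have := count_agreements_hamming (drop k a) (drop k b).
  rewrite -drop_agreements -/s !size_drop eq_ab minnn => /(congr1 (fun m => m%:R : R)).
  by rewrite s_size -eq_ab natrD ltr_pdivrMr // => sum_eq; apply/idP/idP; lra.
apply/bigmax_ltP/sfx_margin_gt0P => // [[_ dist_lt] k | margin_pos].
  by rewrite s_size => ka; rewrite -suffixE // (dist_lt (Ordinal ka)).
split; first lra.
by move=> k _; rewrite suffixE // margin_pos // s_size.
Qed.

End Agreements.

Section PathEdges.
Variables (Sin V : Type) (next : V -> Sin -> V).

Lemma size_path_edges v p : size (path_edges next v p) = size p.
Proof. by elim: p v => //= a p IH v; rewrite IH. Qed.

Lemma path_edges_cat v p q :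
  path_edges next v (p ++ q) = path_edges next v p ++ path_edges next (foldl next v p) q.
Proof. by elim: p v => //= a p IH v; rewrite IH. Qed.

Lemma path_edges_take v k p : path_edges next v (take k p) = take k (path_edges next v p).
Proof. by elim: p v k => [|a p IH] v [|k] //=; rewrite IH. Qed.

Lemma nth_path_edges e0 a0 v p k : (k < size p)%N ->
  nth e0 (path_edges next v p) k = (foldl next v (take k p), nth a0 p k).
Proof. by elim: p v k => [|a p IH] v [|k] //= kp; rewrite IH. Qed.

Lemma foldl_take_succ a0 v p k : (k < size p)%N ->
  foldl next v (take k.+1 p) = next (foldl next v (take k p)) (nth a0 p k).
Proof. by move=> kp; rewrite (take_nth a0) // foldl_rcons. Qed.

End PathEdges.

Section PathEdgesMem.
Variables (Sin V : eqType) (next : V -> Sin -> V).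

Lemma mem_path_edges a0 v p k : (k < size p)%N ->
  (foldl next v (take k p), nth a0 p k) \in path_edges next v p.
Proof.
move=> kp; rewrite -(nth_path_edges _ (v, a0)) //.
by apply: mem_nth; rewrite size_path_edges.
Qed.

Lemma path_edgesP a0 v p e : e \in path_edges next v p ->
  exists2 k, (k < size p)%N & e = (foldl next v (take k p), nth a0 p k).
Proof.
case/(nthP e) => k; rewrite size_path_edges => kp <-.
by exists k => //; apply: nth_path_edges.
Qed.

End PathEdgesMem.

Section Codes.
Variables (R : realFieldType) (eps : R) (n : nat) (Sin Sout V : finType).
Variables (layer : V -> nat) (root : V) (next : V -> Sin -> V) (C : V -> Sin -> Sout).

Local Notation vend := (vend next root).
Local Notation code := (code_of next root C).

Lemma vend_rcons p a : vend (rcons p a) = next (vend p) a.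
Proof. exact: foldl_rcons. Qed.

Lemma layer_vend p : layered_graph n layer root next ->
  (size p <= n)%N -> layer (vend p) = size p.
Proof.
case=> _ layer_root _ layer_next; elim/last_ind: p => [|p a IH] /=.
  by move=> _; apply: layer_root.
by rewrite size_rcons vend_rcons => pn; rewrite layer_next IH ?(ltnW pn).
Qed.

Lemma size_code p : size (code p) = size p.
Proof. by rewrite size_map size_path_edges. Qed.

Lemma code_take k p : code (take k p) = take k (code p).
Proof. by rewrite /code_of path_edges_take map_take. Qed.

Lemma nth_code c0 a0 p k : (k < size p)%N ->
  nth c0 (code p) k = C (vend (take k p)) (nth a0 p k).
Proof.
by move=> kp; rewrite (nth_map (root, a0)) ?size_path_edges // (nth_path_edges _ _ a0).
Qed.

Definition close (w : seq Sout) (p : seq Sin) : bool :=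
  sfx_dist R (code p) (take (size p) w) < 1 - eps.

Definition agree_bits (w : seq Sout) (p : seq Sin) : seq bool :=
  agreements (code p) (take (size p) w).

Definition path_margin (w : seq Sout) (p : seq Sin) : R := sfx_margin eps (agree_bits w p).

Section Word.
Variable w : seq Sout.

Lemma size_agree_bits p : (size p <= size w)%N -> size (agree_bits w p) = size p.
Proof. by move=> pw; rewrite size_agreements size_code size_takel // minnn. Qed.

Lemma nth_agree_bits a0 p k : (k < size p)%N -> (size p <= size w)%N ->
  nth false (agree_bits w p) k = (onth w k == Some (C (vend (take k p)) (nth a0 p k))).
Proof.
move=> kp pw; rewrite nth_agreements_onth ?size_code ?size_takel ?(leq_trans kp) //.
rewrite (@onth_nth_lt _ (C root a0) (code p)) ?size_code // (nth_code _ a0) //.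
by rewrite !onthE map_take nth_take // eq_sym.
Qed.

Lemma agree_bits_take k p : agree_bits w (take k p) = take k (agree_bits w p).
Proof. by rewrite /agree_bits take_agreements code_take size_take_min take_min. Qed.

Lemma agree_bits_rcons p a : (size p < size w)%N ->
  agree_bits w (rcons p a) = rcons (agree_bits w p) (onth w (size p) == Some (C (vend p) a)).
Proof.
move=> pw; have pw' := ltnW pw.
apply: (@eq_from_nth _ false) => [|k]; first by rewrite size_rcons !size_agree_bits ?size_rcons.
rewrite size_agree_bits ?size_rcons // => kp; rewrite (nth_agree_bits a) ?size_rcons //.
rewrite !nth_rcons size_agree_bits // -cats1; move: kp; rewrite ltnS leq_eqVlt.
case/orP => [/eqP-> | kp]; first by rewrite ltnn eqxx takel_cat // take_size.
by rewrite kp (nth_agree_bits a) // takel_cat // ltnW.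
Qed.

Lemma path_margin_rcons p a : (size p < size w)%N ->
  path_margin w (rcons p a) =
  Num.min (path_margin w p) 0 + (onth w (size p) == Some (C (vend p) a))%:R - eps.
Proof. by move=> pw; rewrite /path_margin agree_bits_rcons // sfx_margin_rcons. Qed.

Lemma path_margin_rcons_le p q a : size p = size q -> (size q < size w)%N ->
  vend p = vend q -> path_margin w p <= path_margin w q ->
  path_margin w (rcons p a) <= path_margin w (rcons q a).
Proof.
move=> pq qw end_pq le_pq; have pw : (size p < size w)%N by rewrite pq.
by rewrite !path_margin_rcons // pq end_pq !lerD2r le_min2.
Qed.

Lemma closeE p : eps < 1 -> (0 < size p)%N -> (size p <= size w)%N ->
  close w p = (0 < path_margin w p).
Proof. by move=> eps_lt1 p_gt0 pw; rewrite /close sfx_dist_lt_margin ?size_code ?size_takel. Qed.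

End Word.
End Codes.

Section Decoding.
Variables (R : realFieldType) (eps : R) (Sin Sout V : finType).
Variables (root : V) (next : V -> Sin -> V) (C : V -> Sin -> Sout).

Local Notation vend := (vend next root).
Local Notation code := (code_of next root C).
Local Notation close := (close eps root next C).

Lemma count_agreeing_far_prefixes x w : 0 <= eps -> eps < 1 -> size x = size w ->
  (count (fun k => (onth (code x) k == onth w k) && ~~ close w (take k.+1 x))
         (iota 0 (size w)))%:R <= eps * (size w)%:R.
Proof.
move=> eps_ge0 eps_lt1 xw; set s := agree_bits root next C w x.
have s_size : size s = size w by rewrite size_agree_bits xw.
rewrite -s_size.
apply: le_trans (count_true_nonpos_prefix_margin s eps_ge0); rewrite ler_nat.
apply/eq_leq/eq_in_count => k; rewrite mem_iota s_size => /andP [_ kw].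
congr (_ && _).
  by rewrite /s /agree_bits xw take_size nth_agreements_onth ?size_code ?xw.
rewrite (closeE _ _ _ eps_lt1) ?size_takel ?xw // -leNgt.
by rewrite /path_margin agree_bits_take.
Qed.

Definition ambiguous (w : seq Sout) : bool :=
  [exists t1 : (size w).-tuple Sin, exists t2 : (size w).-tuple Sin,
     [&& sfx_dist R (code t1) w < 1 - eps, sfx_dist R (code t2) w < 1 - eps
       & vend t1 != vend t2]].

Lemma CDec_unambiguous w p : size p = size w -> sfx_dist R (code p) w < 1 - eps ->
  ~~ ambiguous w -> CDec next root C eps w = Some (vend p).
Proof.
move=> pw p_close unamb; pose t : (size w).-tuple Sin := Tuple (introT eqP pw).
rewrite /CDec; set cands := undup _; suff -> : cands = [:: vend p] by [].
apply: uniq_subset_seq1; first exact: undup_uniq.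
  by rewrite mem_undup; apply/mapP; exists t; rewrite ?mem_enum ?inE.
move=> u; rewrite mem_undup => /mapP [t' + ->]; rewrite mem_enum !inE => t'_close.
apply: contraNT unamb => ne; apply/existsP; exists t'.
by apply/existsP; exists t; rewrite t'_close /= p_close ne.
Qed.

Lemma CDec_prefix_fail x w k : size x = size w ->
  CDec next root C eps (take k.+1 w) != Some (vend (take k.+1 x)) ->
  ~~ close w (take k.+1 x) || ambiguous (take k.+1 w).
Proof.
move=> xw; apply: contraR; rewrite negb_or negbK => /andP [x_close unamb].
apply/eqP/CDec_unambiguous => //; first by rewrite !size_take xw.
by move: x_close; rewrite /close size_take_min xw take_min take_size.
Qed.

End Decoding.

Section BestPaths.
Variables (R : realFieldType) (eps : R) (n : nat) (Sin Sout V : finType).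
Variables (layer : V -> nat) (root : V) (next : V -> Sin -> V) (C : V -> Sin -> Sout).
Hypothesis graphG : layered_graph n layer root next.
Hypothesis eps_gt0 : 0 < eps.
Variable w : seq Sout.
Hypothesis w_size : size w = n.

Local Notation vend := (vend next root).
Local Notation margin := (path_margin eps root next C w).

Definition best_in_edge j (best_j : V -> seq Sin) v (e : V * Sin) : bool :=
  [&& next e.1 e.2 == v, vend (best_j e.1) == e.1 & size (best_j e.1) == j].

(* [best j v] is a root path of length [j] to [v] of maximal margin, extended
   one edge at a time so that the prefixes of best paths are best paths; it is
   junk when [v] has no root path of length [j] (see [has_best]). *)
Fixpoint best j v : seq Sin :=
  if j is i.+1 then
    let Q := best_in_edge i (best i) v in
    let extend e := rcons (best i e.1) e.2 in
    if [pick e | Q e && [forall e', Q e' ==> (margin (extend e') <= margin (extend e))]]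
      is Some e then extend e else best i v
  else [::].

Definition has_best j v := (vend (best j v) == v) && (size (best j v) == j).

Lemma size_best j v : (size (best j v) <= j)%N.
Proof.
elim: j v => [|j IH] v //=; case: pickP => [e /andP [/and3P [_ _ /eqP size_e] _] | _].
  by rewrite size_rcons size_e.
exact: leq_trans (IH v) (leqnSn j).
Qed.

Lemma has_best_succ j v : has_best j.+1 v ->
  exists2 e : V * Sin, best j.+1 v = rcons (best j e.1) e.2 & next e.1 e.2 = v /\ has_best j e.1.
Proof.
rewrite /has_best /=; case: pickP => [e /andP [/and3P [/eqP nxt vend_e size_e] _] _ | _].
  by exists e => //; rewrite vend_e size_e.
by case/andP => _ /eqP size_v; have := size_best j v; rewrite size_v ltnn.
Qed.

Lemma take_best j v k : has_best j v -> (k <= j)%N ->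
  take k (best j v) = best k (vend (take k (best j v))).
Proof.
elim: j v => [|j IH] v; first by move=> _; rewrite leqn0 => /eqP ->.
move=> /has_best_succ [e best_v [nxt /[dup] e_best /andP [/eqP vend_e /eqP size_e]]].
rewrite best_v leq_eqVlt => /orP [/eqP-> | kj].
  by rewrite take_oversize ?size_rcons ?size_e // vend_rcons vend_e nxt best_v.
by rewrite -cats1 takel_cat ?size_e //; apply: IH.
Qed.

Lemma best_max p : (size p <= n)%N ->
  has_best (size p) (vend p) /\ margin p <= margin (best (size p) (vend p)).
Proof.
elim/last_ind: p => [|q a IH]; first by rewrite /has_best /= eqxx.
rewrite size_rcons => qn; have [/andP [/eqP vend_q /eqP size_q] le_q] := IH (ltnW qn).
set j := size q in qn vend_q size_q le_q *; set u := vend q in vend_q le_q *.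
set Q := best_in_edge j (best j) (vend (rcons q a)).
set F := fun e : V * Sin => margin (rcons (best j e.1) e.2).
have Q_ua : Q (u, a) by rewrite /Q /best_in_edge vend_rcons /= vend_q size_q !eqxx.
have le_qa : margin (rcons q a) <= F (u, a).
  by apply: path_margin_rcons_le; rewrite ?size_q ?w_size.
rewrite /has_best /=.
case: pickP => [e /andP [/and3P [/eqP nxt /eqP vend_e /eqP size_e] F_max] | none].
  split; first by rewrite vend_rcons vend_e nxt size_rcons size_e !eqxx.
  by apply: le_trans le_qa _; move/forallP/(_ (u, a))/implyP/(_ Q_ua): F_max.
case: (arg_maxP F Q_ua) => e Q_e e_max; move/negP: (none e); case.
by apply/andP; split; [exact: Q_e | apply/forallP => e'; apply/implyP => /e_max].
Qed.

Lemma layer_le_n v : (layer v <= n)%N.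
Proof. by case: graphG. Qed.

Lemma layer_edge q k : (size q <= n)%N -> (k <= size q)%N -> layer (vend (take k q)) = k.
Proof. by move=> qn kq; rewrite (layer_vend graphG) size_takel // (leq_trans kq). Qed.

Definition agrees_at (u : seq Sout) (e : V * Sin) := onth u (layer e.1) == Some (C e.1 e.2).

(* [v] lies in L(C, w, eps), witnessed by its best path (see [best_max]). *)
Definition in_L v := [&& (0 < layer v)%N, has_best (layer v) v & 0 < margin (best (layer v) v)].

Lemma in_L_vend p : (0 < size p)%N -> (size p <= n)%N -> 0 < margin p -> in_L (vend p).
Proof.
move=> p_gt0 pn p_pos; have [has_p le_p] := best_max pn.
by rewrite /in_L (layer_vend graphG pn) p_gt0 has_p (lt_le_trans p_pos le_p).
Qed.

Lemma has_best_in_L v : in_L v -> has_best (layer v) v.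
Proof. by case/and3P. Qed.

Lemma best_margin_in_L v : in_L v -> 0 < margin (best (layer v) v).
Proof. by case/and3P. Qed.

Lemma size_best_in_L v : in_L v -> size (best (layer v) v) = layer v.
Proof. by case/and3P => _ /andP [_ /eqP]. Qed.

Lemma vend_best_in_L v : in_L v -> vend (best (layer v) v) = v.
Proof. by case/and3P => _ /andP [/eqP]. Qed.

Local Notation ambiguous_at k := (ambiguous eps root next C (take k.+1 w)).

Lemma ambiguous_margins k : eps < 1 -> (k < n)%N -> ambiguous_at k ->
  exists p1 p2, [/\ size p1 = k.+1, size p2 = k.+1, 0 < margin p1, 0 < margin p2
                  & vend p1 != vend p2].
Proof.
move=> eps_lt1 kn /existsP [t1 /existsP [t2 /and3P [close1 close2 ne]]].
have w_k : size (take k.+1 w) = k.+1 by rewrite size_takel ?w_size.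
have size1 : size (val t1) = k.+1 by rewrite size_tuple w_k.
have size2 : size (val t2) = k.+1 by rewrite size_tuple w_k.
exists t1, t2; split => //; rewrite -(closeE _ _ _ eps_lt1) ?size1 ?size2 ?w_size //.
  by rewrite /close size1.
by rewrite /close size2.
Qed.

Section PrefixTree.
Variables (a0 : Sin) (vD : V).
Hypothesis vD_in_L : in_L vD.
Hypothesis vD_deepest : forall v, in_L v -> (layer v <= layer vD)%N.

Local Notation D := (layer vD).
Local Notation edge q k := (vend (take k q), nth a0 q k).

Definition trunk := best D vD ++ nseq (n - D) a0.

Definition tree_paths :=
  [seq best (layer v) v | v <- enum V & in_L v && (v != vD)] ++ [:: trunk].

Definition tree_edges := flatten (map (path_edges next root) tree_paths).

(* [w] where some tree edge below layer [D] agrees with it, the label of the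
   trunk elsewhere: all tree paths stay close, and every layer gets an
   agreeing edge. *)
Definition tree_word := mkseq (fun k =>
  if (k < D)%N && [exists e, [&& e \in tree_edges, layer e.1 == k & agrees_at w e]]
  then nth (C root a0) w k else C (vend (take k trunk)) (nth a0 trunk k)) n.

Lemma D_gt0 : (0 < D)%N.
Proof. by case/and3P: vD_in_L. Qed.

Lemma D_le_n : (D <= n)%N.
Proof. exact: layer_le_n. Qed.

Lemma size_trunk : size trunk = n.
Proof. by rewrite size_cat size_best_in_L // size_nseq subnKC // D_le_n. Qed.

Lemma size_tree_word : size tree_word = n.
Proof. exact: size_mkseq. Qed.

Lemma tree_pathsP q : q \in tree_paths ->
  (exists2 v, in_L v & q = best (layer v) v) \/ q = trunk.
Proof.
rewrite mem_cat mem_seq1 => /orP [/mapP [v] | /eqP]; last by right.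
by rewrite mem_filter => /andP [/andP [v_in_L _] _] ->; left; exists v.
Qed.

Lemma size_tree_path q : q \in tree_paths -> (0 < size q)%N /\ (size q <= n)%N.
Proof.
case/tree_pathsP => [[v v_in_L ->] | ->]; last by rewrite size_trunk (leq_trans D_gt0 D_le_n).
by rewrite size_best_in_L // layer_le_n; case/and3P: v_in_L.
Qed.

Lemma trunk_edges_sub : {subset path_edges next root trunk <= tree_edges}.
Proof.
by move=> e e_in; apply/flatten_mapP; exists trunk; rewrite // mem_cat mem_seq1 eqxx orbT.
Qed.

Lemma best_edges_sub v : in_L v -> {subset path_edges next root (best (layer v) v) <= tree_edges}.
Proof.
move=> v_in_L e; have [-> e_in | v_ne e_in] := eqVneq v vD.
  by apply: trunk_edges_sub; rewrite path_edges_cat mem_cat e_in.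
apply/flatten_mapP; exists (best (layer v) v) => //.
by rewrite mem_cat; apply/orP; left; apply: map_f; rewrite mem_filter v_in_L v_ne mem_enum.
Qed.

Lemma mem_best_edges v k : in_L v -> (k < layer v)%N -> edge (best (layer v) v) k \in tree_edges.
Proof.
by move=> v_in_L kv; apply: (best_edges_sub v_in_L); rewrite mem_path_edges ?size_best_in_L.
Qed.

Lemma tree_edgesP e : e \in tree_edges ->
  exists2 q, q \in tree_paths & exists2 k, (k < size q)%N & e = edge q k.
Proof. by case/flatten_mapP => q q_in /(path_edgesP a0); exists q. Qed.

Lemma take_tree_path q k : q \in tree_paths -> (k <= size q)%N -> (k <= D)%N ->
  take k q = best k (vend (take k q)).
Proof.
move=> q_in + kD; case/tree_pathsP: q_in => [[v v_in_L ->] | ->] kq.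
  by apply: take_best; [exact: has_best_in_L | rewrite -(size_best_in_L v_in_L)].
rewrite /trunk takel_cat ?size_best_in_L //.
by apply: take_best => //; exact: has_best_in_L.
Qed.

Definition tree_in_edge t :=
  edge (if (layer t <= D)%N then best (layer t) t else trunk) (layer t).-1.

(* Below the trunk's end the tree paths follow best paths (take_tree_path),
   above it there is only the trunk. *)
Lemma tree_in_edgeE e : e \in tree_edges -> e = tree_in_edge (next e.1 e.2).
Proof.
case/tree_edgesP => q q_in [k kq ->] /=; rewrite -(foldl_take_succ _ a0) //.
have [_ qn] := size_tree_path q_in.
rewrite /tree_in_edge (layer_edge qn kq) succnK.
case: (leqP k.+1 D) => [kD | Dk].
  by rewrite -(take_tree_path q_in kq kD) take_takel // nth_take.
case/tree_pathsP: q_in kq => [[v v_in_L ->] | -> //].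
by rewrite size_best_in_L // => /(leq_trans Dk); rewrite ltnNge vD_deepest.
Qed.

Lemma tree_edges_inj e1 e2 : e1 \in tree_edges -> e2 \in tree_edges ->
  next e1.1 e1.2 = next e2.1 e2.2 -> e1 = e2.
Proof. by move=> /tree_in_edgeE e1E /tree_in_edgeE e2E eq_next; rewrite e1E e2E eq_next. Qed.

Lemma layer_tree_edge e : e \in tree_edges -> (layer e.1 < n)%N.
Proof.
case/tree_edgesP => q q_in [k kq ->] /=; have [_ qn] := size_tree_path q_in.
by rewrite (layer_edge qn (ltnW kq)) (leq_trans kq).
Qed.

Lemma uniq_tree_ends : uniq (map vend tree_paths).
Proof.
rewrite map_cat cat_uniq /= andbT -map_comp map_id_in; last first.
  by move=> v; rewrite mem_filter => /andP [/andP [v_in_L _] _]; apply: vend_best_in_L.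
rewrite filter_uniq ?enum_uniq //= orbF mem_filter; apply/negP => /andP [/andP [trunk_in_L]].
have trunk_layer : layer (vend trunk) = n by rewrite (layer_vend graphG) size_trunk.
have Dn : D = n by apply/eqP; rewrite eqn_leq D_le_n -trunk_layer vD_deepest.
by rewrite /trunk -Dn subnn cats0 vend_best_in_L ?eqxx.
Qed.

Lemma onth_tree_word k : (k < n)%N -> onth tree_word k =
  if (k < D)%N && [exists e, [&& e \in tree_edges, layer e.1 == k & agrees_at w e]]
  then onth w k else Some (C (vend (take k trunk)) (nth a0 trunk k)).
Proof.
move=> kn; rewrite (onth_nth_lt (C root a0)) ?size_tree_word // nth_mkseq //.
by case: ifP => // _; rewrite (onth_nth_lt (C root a0)) ?w_size.
Qed.

Lemma tree_word_agrees e : e \in tree_edges -> (layer e.1 < D)%N ->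
  agrees_at w e -> agrees_at tree_word e.
Proof.
move=> e_in eD agr_e.
have witness : [exists e', [&& e' \in tree_edges, layer e'.1 == layer e.1 & agrees_at w e']].
  by apply/existsP; exists e; rewrite e_in eqxx.
by rewrite /agrees_at onth_tree_word ?(leq_trans eD D_le_n) // eD witness.
Qed.

Lemma nth_agree_bits_edge u q k : size u = n -> (size q <= n)%N -> (k < size q)%N ->
  nth false (agree_bits root next C u q) k = agrees_at u (edge q k).
Proof.
move=> un qn kq; rewrite (nth_agree_bits _ _ _ a0) ?un //.
by rewrite /agrees_at (layer_edge qn (ltnW kq)).
Qed.

Lemma best_agree_bits_mono v : in_L v ->
  all2 implb (agree_bits root next C w (best (layer v) v))
             (agree_bits root next C tree_word (best (layer v) v)).
Proof.
move=> v_in_L; have bn : (size (best (layer v) v) <= n)%N.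
  by rewrite size_best_in_L ?layer_le_n.
apply: all2_implb_nth => [|k]; first by rewrite !size_agree_bits ?w_size ?size_tree_word.
rewrite size_agree_bits ?w_size // => kv.
rewrite !nth_agree_bits_edge ?size_tree_word //; apply: tree_word_agrees.
- by rewrite mem_best_edges // -(size_best_in_L v_in_L).
- by rewrite /= layer_edge ?(ltnW kv) // (leq_trans kv) ?size_best_in_L ?vD_deepest.
Qed.

Lemma trunk_agree_bits_mono :
  all2 implb (agree_bits root next C w (best D vD) ++ nseq (n - D) true)
             (agree_bits root next C tree_word trunk).
Proof.
have bD : size (best D vD) = D := size_best_in_L vD_in_L.
have bits_D : size (agree_bits root next C w (best D vD)) = D.
  by rewrite size_agree_bits bD ?w_size ?D_le_n.
apply: all2_implb_nth => [|k].
  rewrite size_cat size_nseq bits_D subnKC ?D_le_n //.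
  by rewrite size_agree_bits ?size_trunk ?size_tree_word.
rewrite size_cat size_nseq bits_D subnKC ?D_le_n // => kn.
rewrite (@nth_agree_bits_edge tree_word trunk) ?size_tree_word ?size_trunk // nth_cat bits_D.
have [kD | Dk] := ltnP k D; last first.
  rewrite nth_nseq ltn_subRL subnKC ?D_le_n // kn /agrees_at.
  by rewrite layer_edge ?size_trunk ?(ltnW kn) // onth_tree_word // ltnNge Dk.
have edge_trunk : edge trunk k = edge (best D vD) k.
  by rewrite /trunk takel_cat ?bD ?(ltnW kD) // nth_cat bD kD.
rewrite nth_agree_bits_edge ?w_size ?bD ?D_le_n // edge_trunk => agr_k.
by apply: tree_word_agrees; rewrite ?mem_best_edges //= layer_edge ?bD ?D_le_n // ltnW.
Qed.

Lemma tree_path_margin q : eps < 1 -> q \in tree_paths ->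
  0 < path_margin eps root next C tree_word q.
Proof.
move=> eps_lt1 /tree_pathsP [[v v_in_L ->] | ->]; rewrite /path_margin.
  exact: lt_le_trans (best_margin_in_L v_in_L) (sfx_margin_mono _ (best_agree_bits_mono v_in_L)).
apply: lt_le_trans _ (sfx_margin_mono _ trunk_agree_bits_mono).
exact: sfx_margin_cat_true (best_margin_in_L vD_in_L).
Qed.

Lemma prefix_tree_tree_paths : eps < 1 -> prefix_tree n next root C eps tree_word tree_paths.
Proof.
move=> eps_lt1; split; [move=> q q_in | exact: uniq_tree_ends | exact: tree_edges_inj].
have [q_gt0 qn] := size_tree_path q_in; split => //.
by rewrite -/(close eps root next C tree_word q) closeE ?size_tree_word ?tree_path_margin.
Qed.

Lemma agreeing_tree_edge k : (k < n)%N ->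
  exists2 e, e \in tree_edges & (layer e.1 == k) && agrees_at tree_word e.
Proof.
move=> kn; have := onth_tree_word kn.
case: ifP => [/andP [kD /existsP [e /and3P [e_in /eqP e_k agr_e]]] _ | _ onth_k].
  by exists e; rewrite // e_k eqxx tree_word_agrees // e_k.
exists (edge trunk k); first by rewrite trunk_edges_sub // mem_path_edges ?size_trunk.
by rewrite /agrees_at /= layer_edge ?size_trunk ?(ltnW kn) // onth_k !eqxx.
Qed.

Lemma last_tree_edge p k : size p = k.+1 -> (k < n)%N -> 0 < margin p ->
  exists2 e, e \in tree_edges &
    [/\ layer e.1 = k, agrees_at tree_word e & next e.1 e.2 = vend p].
Proof.
move=> pk kn p_pos; have pn : (size p <= n)%N by rewrite pk.
have u_in_L : in_L (vend p) by apply: in_L_vend; rewrite ?pk.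
have u_k : layer (vend p) = k.+1 by rewrite (layer_vend graphG).
set u := vend p in u_in_L u_k *; set B := best (layer u) u.
have B_k : size B = k.+1 by rewrite size_best_in_L.
have Bn : (size B <= n)%N by rewrite B_k.
exists (edge B k); first by rewrite mem_best_edges ?u_k.
have e_k : layer (vend (take k B)) = k by rewrite layer_edge // B_k.
split => //.
- apply: tree_word_agrees; rewrite ?mem_best_edges ?u_k ?e_k //.
    by rewrite -u_k vD_deepest.
  have := sfx_margin_last (ltW eps_gt0) (best_margin_in_L u_in_L).
  rewrite -nth_last size_agree_bits ?w_size //.
  by rewrite B_k nth_agree_bits_edge ?B_k.
- by rewrite -(foldl_take_succ _ a0) ?B_k // -B_k take_size; apply: vend_best_in_L.
Qed.

Lemma tree_layer_agreements k : eps < 1 -> (k < n)%N ->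
  ((ambiguous_at k).+1 <= count (fun e => agrees_at tree_word e && (layer e.1 == k))
                               (undup tree_edges))%N.
Proof.
move=> eps_lt1 kn; rewrite -size_filter.
have sub e : e \in tree_edges -> layer e.1 = k -> agrees_at tree_word e ->
    e \in [seq e <- undup tree_edges | agrees_at tree_word e && (layer e.1 == k)].
  by move=> e_in e_k agr_e; rewrite mem_filter agr_e e_k eqxx mem_undup.
case: (boolP (ambiguous_at k)) => [amb_k | _]; last first.
  have [e e_in /andP [/eqP e_k agr_e]] := agreeing_tree_edge kn.
  by apply: (@uniq_leq_size _ [:: e]) => // e'; rewrite inE => /eqP ->; apply: sub.
have [p1 [p2 [p1_k p2_k p1_pos p2_pos ne]]] := ambiguous_margins eps_lt1 kn amb_k.
have [e1 e1_in [e1_k agr1 nxt1]] := last_tree_edge p1_k kn p1_pos.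
have [e2 e2_in [e2_k agr2 nxt2]] := last_tree_edge p2_k kn p2_pos.
have e12 : e1 != e2 by apply: contraNneq ne => eq12; rewrite -nxt1 -nxt2 eq12.
apply: (@uniq_leq_size _ [:: e1; e2]) => [|e]; first by rewrite /= inE e12.
by rewrite !inE => /orP [] /eqP ->; apply: sub.
Qed.

Lemma agr_tree_paths : eps < 1 ->
  (n + count (fun k => ambiguous_at k) (iota 0 n) <= agr layer next root C tree_word tree_paths)%N.
Proof.
move=> eps_lt1; rewrite /agr (@count_by_levels _ (fun e : V * Sin => layer e.1) _ n); last first.
  by apply/allP => e; rewrite mem_undup => /layer_tree_edge.
rewrite -{1}(size_iota 0 n) -sum1_size -sumn_count sumnE big_map -big_split /=.
rewrite big_seq [leqRHS]big_seq; apply: leq_sum => k.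
by rewrite mem_iota => /andP [_ kn]; apply: tree_layer_agreements.
Qed.


End PrefixTree.

Lemma count_ambiguous_prefixes : eps < 1 -> eps_sensitive n layer next root C eps ->
  (count (fun k => ambiguous_at k) (iota 0 n))%:R <= eps * n%:R.
Proof.
move=> eps_lt1 sensitive.
have [/hasP [k] | no_amb] := boolP (has (fun k => ambiguous_at k) (iota 0 n)); last first.
  move: no_amb; rewrite has_count -leqNgt leqn0 => /eqP ->.
  by rewrite mulr_ge0 ?ler0n ?ltW.
rewrite mem_iota => /andP [_ kn] /(ambiguous_margins eps_lt1 kn) [p [_ [p_k _ p_pos _ _]]].
have pn : (size p <= n)%N by rewrite p_k.
have u_in_L : in_L (vend p) by apply: in_L_vend; rewrite ?p_k.
case: p p_k u_in_L {pn p_pos} => // a0 p _ u_in_L.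
case: (arg_maxnP layer u_in_L) => vD vD_in_L vD_deepest.
have := sensitive _ (size_tree_word a0 vD) _ (prefix_tree_tree_paths a0 vD_in_L vD_deepest eps_lt1).
have := agr_tree_paths a0 vD_in_L vD_deepest eps_lt1; rewrite -(ler_nat R) natrD.
by rewrite mulrDl mul1r => ge le; have := le_trans ge le; lra.
Qed.

End BestPaths.

(* Indices i in 1..n are written i = k.+1 with k in 0..n-1 (0-indexed positions). *)
Theorem theorem5p11 (R : realFieldType) (eps : R) (n : nat)
  (Sin Sout V : finType) (layer : V -> nat) (root : V) (next : V -> Sin -> V)
  (C : V -> Sin -> Sout) :
  0 < eps ->
  layered_graph n layer root next ->
  eps_sensitive n layer next root C eps ->
  forall (x : seq Sin) (w : seq Sout), size x = n -> size w = n ->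
  (count (fun k =>
      (onth (code_of next root C x) k == onth w k) &&
      (CDec next root C eps (take k.+1 w) != Some (vend next root (take k.+1 x))))
     (iota 0 n))%:R <= 2 * eps * n%:R.
Proof.
move=> eps_gt0 graphG sensitive x w x_n w_n; set bad := count _ _.
have [eps_ge1 | eps_lt1] := leP 1 eps.
  apply: le_trans (_ : n%:R <= _); last by have := ler0n R n; nra.
  by rewrite ler_nat /bad -[leqRHS](size_iota 0 n) count_size.
pose far k := (onth (code_of next root C x) k == onth w k) &&
              ~~ close eps root next C w (take k.+1 x).
pose amb k := ambiguous eps root next C (take k.+1 w).
have xw : size x = size w by rewrite x_n w_n.
have far_le : (count far (iota 0 n))%:R <= eps * n%:R.
  by rewrite -w_n; apply: count_agreeing_far_prefixes; rewrite ?ltW.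
have amb_le : (count amb (iota 0 n))%:R <= eps * n%:R.
  exact: (count_ambiguous_prefixes graphG eps_gt0 w_n eps_lt1 sensitive).
suff split : (bad <= count far (iota 0 n) + count amb (iota 0 n))%N.
  by move: split; rewrite -(ler_nat R) natrD; lra.
rewrite /bad -count_predUI; apply: leq_trans (leq_addr _ _).
apply: sub_count => k /= /andP [agree wrong].
by rewrite /far agree /=; apply: CDec_prefix_fail.
Qed.
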